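(* Let $f:2^{[k]}\to\mathbb{R}$ be submodular and normalized, and let $\bar f=2^{-k}\sum_{S\subseteq[k]}f(S)$. Then $\bar f\ge f([k])/2$, and $\bar f=f([k])/2$ if and only if $f$ is modular.
   Context: $[k]=\{1,\dots,k\}$. $f$ is submodular if $f(S)+f(T)\ge f(S\cup T)+f(S\cap T)$ for all $S,T\subseteq[k]$, modular if this holds with equality for all $S,T$, normalized if $f(\emptyset)=0$. *)

From mathcomp Require Import all_boot all_order all_algebra.
Set Implicit Arguments. Unset Strict Implicit. Unset Printing Implicit Defensive.
Import Order.TTheory GRing.Theory Num.Theory.
Local Open Scope ring_scope.

Definition submodular (R : numDomainType) (k : nat) (f : {set 'I_k} -> R) : Prop :=
  forall S T : {set 'I_k}, f (S :|: T) + f (S :&: T) <= f S + f T.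

Definition modular (R : numDomainType) (k : nat) (f : {set 'I_k} -> R) : Prop :=
  forall S T : {set 'I_k}, f S + f T = f (S :|: T) + f (S :&: T).

Definition normalized (R : numDomainType) (k : nat) (f : {set 'I_k} -> R) : Prop :=
  f set0 = 0.

Definition favg (R : numFieldType) (k : nat) (f : {set 'I_k} -> R) : R :=
  (2%:R ^+ k)^-1 * \sum_(S : {set 'I_k}) f S.

From mathcomp Require Import all_boot all_order all_algebra.
From mathcomp Require Import ring lra.
Import Order.TTheory GRing.Theory Num.Theory.
Local Open Scope ring_scope.

(* Pairing each set with its complement, [2^k (favg f - f [k]/2)] is half the
   sum of the gaps [f S + f (~S) - f [k]].  Submodularity on the pair (S, ~S)
   makes every gap nonnegative, which gives the inequality; equality forces all
   gaps to vanish, and then submodularity applied to (S, T) and to (~S, ~T)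
   yields two opposite inequalities, i.e. modularity. *)

Lemma sum_setC (V : nmodType) (T : finType) (F : {set T} -> V) :
  \sum_(S : {set T}) F (~: S) = \sum_(S : {set T}) F S.
Proof. by rewrite [RHS](reindex_inj (@setC_inj T)). Qed.

Lemma submodular_setC_ge (R : numDomainType) (k : nat) (f : {set 'I_k} -> R)
    (S : {set 'I_k}) :
  submodular f -> normalized f -> f setT <= f S + f (~: S).
Proof.
by move=> fsub f0; have := fsub S (~: S); rewrite setUCr setICr f0 addr0.
Qed.

Lemma modular_setC (R : numDomainType) (k : nat) (f : {set 'I_k} -> R)
    (S : {set 'I_k}) :
  modular f -> normalized f -> f S + f (~: S) = f setT.
Proof. by move=> fmod f0; rewrite fmod setUCr setICr f0 addr0. Qed.

Lemma submodular_setC_modular (R : realDomainType) (k : nat)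
    (f : {set 'I_k} -> R) :
  submodular f -> (forall S, f S + f (~: S) = f setT) -> modular f.
Proof.
move=> fsub fC S T.
have := fsub (~: S) (~: T); rewrite -setCI -setCU.
have := fsub S T; have := fC S; have := fC T.
have := fC (S :|: T); have := fC (S :&: T).
lra.
Qed.

Lemma favg_sub_halfT (R : numFieldType) (k : nat) (f : {set 'I_k} -> R) :
  favg f - f setT / 2%:R
  = (2%:R ^+ k.+1)^-1 * \sum_(S : {set 'I_k}) (f S + f (~: S) - f setT).
Proof.
have card_sets : #|{: {set 'I_k}}| = (2 ^ k)%N.
  by rewrite -cardsT -powersetT card_powerset cardsT card_ord.
rewrite sumrB big_split /= sum_setC sumr_const card_sets /favg.
rewrite -[f setT *+ _]mulr_natr natrX exprS.
by field; rewrite ?expf_neq0 ?pnatr_eq0.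
Qed.

Theorem lemma6 (R : realFieldType) (k : nat) (f : {set 'I_k} -> R) :
  submodular f -> normalized f ->
  f setT / 2%:R <= favg f /\ (favg f = f setT / 2%:R <-> modular f).
Proof.
move=> fsub f0.
have gap_ge0 S : 0 <= f S + f (~: S) - f setT.
  by rewrite subr_ge0 submodular_setC_ge.
have scale_gt0 : 0 < (2%:R ^+ k.+1 : R)^-1 by rewrite invr_gt0 exprn_gt0.
split.
  rewrite -subr_ge0 favg_sub_halfT.
  by apply: mulr_ge0; [exact: ltW | exact: sumr_ge0].
split=> [favg_eq | fmod].
- have gaps_sum0 : \sum_(S : {set 'I_k}) (f S + f (~: S) - f setT) = 0.
    apply: (mulfI (lt0r_neq0 scale_gt0)).
    by rewrite -favg_sub_halfT favg_eq subrr mulr0.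
  apply: submodular_setC_modular => // S; apply: subr0_eq.
  exact: (psumr_eq0P (fun T _ => gap_ge0 T) gaps_sum0).
- apply: subr0_eq; rewrite favg_sub_halfT big1 ?mulr0 // => S _.
  by rewrite modular_setC ?subrr.
Qed.
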